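(* Let $0\le k\le n$, $\lambda\in SP_n$ and $\mu\in OP_k$. Then $$\widetilde{\chi}^{\lambda}\big(\Theta_\mu(n)\big)=2^k\,n^{\downarrow k}\,\frac{\chi^{\lambda}(\sigma_\mu(n))}{\chi^{\lambda}(1)},$$ where $n^{\downarrow k}=n(n-1)\cdots(n-k+1)$.
   Context: $\widehat{B}_n$ is the group generated by $z,a_1,\dots,a_n,s_1,\dots,s_{n-1}$ with $z^2=1$, $z$ central, $a_i^2=z$, $a_ia_j=za_ja_i$ ($i\ne j$), $s_i$ satisfying the Coxeter relations of $S_n$, and $s_ia_js_i^{-1}=a_{s_i(j)}$; $\widehat B_{m}\subset\widehat B_n$ naturally for $m\le n$, $\widehat B_0=\{1,z\}$. $\mathrm{Ser}_n=\mathrm{Cl}_n\rtimes\mathbb C[S_n]$ is the Sergeev superalgebra ($\mathrm{Cl}_n$ generated by $c_i$ with $c_i^2=-1$, $c_ic_j=-c_jc_i$, $S_n$ permuting indices), and $\pi:\mathbb C[\widehat B_n]\to\mathrm{Ser}_n$ is the surjection $z\mapsto-1$, $a_i\mapsto c_i$, $s_i\mapsto s_i$. For $0\le m\le n$, $L_{n,m}\subset\widehat B_n$ is the set of products $g_ng_{n-1}\cdots g_{m+1}$ with $g_j=s_{i_j}s_{i_j+1}\cdots s_{j-1}a_j^{\epsilon_j}$, $1\le i_j\le j$, $\epsilon_j\in\{0,1\}$ (empty $s$-product when $i_j=j$); $L_{n,n}=\{1\}$; it is a set of left coset representatives of $\widehat B_m$ in $\widehat B_n$. $OP_k$ is the set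 of partitions of $k$ into odd parts; for $\mu=(\mu_1,\dots,\mu_r)\in OP_k$ let $\pi_\mu=(k,k-1,\dots,k-\mu_r+1)\cdots(\mu_1+\mu_2,\dots,\mu_1+1)(\mu_1,\dots,2,1)\in S_k$ ($\pi_\mu=1$ if $\mu=(1^k)$), and for $n\ge k$ let $\sigma_\mu(n)=\tau_0\pi_\mu\tau_0^{-1}\in S_n\subset\widehat B_n$, where $\tau_0$ is the longest element of $S_n$. Define $\Theta_\mu(n)=\pi\big(\sum_{g\in L_{n,n-k}}g\,\sigma_\mu(n)\,g^{-1}\big)\in\mathrm{Ser}_n$. $SP_n$: strict partitions of $n$; $L^\lambda$ the simple $\mathrm{Ser}_n$-supermodule labeled by $\lambda$, $\chi^\lambda$ its (ordinary trace) character and $\widetilde\chi^\lambda=\chi^\lambda/\dim L^\lambda$ the normalized character. *)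

From HB Require Import structures.
From mathcomp Require Import all_boot all_order all_algebra all_fingroup algC.
Set Implicit Arguments. Unset Strict Implicit. Unset Printing Implicit Defensive.
Import GRing.Theory Num.Theory.

Definition mkperm (T : finType) (f : T -> T) : {perm T} :=
  match @injectiveP _ _ f with
  | ReflectT h => perm h
  | ReflectF _ => 1%g
  end.

(* s_i (1-based i, 1 <= i <= n-1): the transposition (i, i+1) of {1..n},
   realised on 'I_n = {0..n-1} as the transposition (i-1, i). *)
Definition sperm (n i : nat) : {perm 'I_n} :=
  match (insub i.-1 : option 'I_n), (insub i : option 'I_n) with
  | Some a, Some b => tperm a b
  | _, _ => 1%g
  end.

Definition odd_partition (k : nat) (mu : seq nat) : bool :=
  [&& sorted geq mu, all odd mu & sumn mu == k].

Definition psums (mu : seq nat) : seq nat := scanl addn 0%N mu.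

(* pi_mu on {1,2,...} (1-based): product of the cycles
   (mu_1+..+mu_r, ..., mu_1+..+mu_(r-1)+1), which map y |-> y-1 inside a block
   and the first element of a block to its last element; identity above k. *)
Definition pi_fun (mu : seq nat) (y : nat) : nat :=
  if (0 < y) && (y <= sumn mu) then
    if y.-1 \in 0%N :: psums mu then nth y [seq p <- psums mu | y <= p] 0
    else y.-1
  else y.

(* pi_mu as an element of S_k \subset S_n, acting on 'I_n (0-based) *)
Definition pi_perm (n : nat) (mu : seq nat) : {perm 'I_n} :=
  mkperm (fun x : 'I_n => insubd x (pi_fun mu x.+1).-1).

Definition tau0 (n : nat) : {perm 'I_n} := mkperm (@rev_ord n).

Definition sigma_mu (n : nat) (mu : seq nat) : {perm 'I_n} :=
  (tau0 n * pi_perm n mu * (tau0 n)^-1)%g.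

Local Open Scope ring_scope.

(* A finite-dimensional Ser_n-supermodule V = C^d is given by
   J : the parity operator (J^2 = 1, V_0/V_1 = its +1/-1 eigenspaces),
   C j : the action of the odd generator c_(j+1) of Cl_n,
   rhoS s : the action of the permutation s in S_n,
   such that  Ser_n -> 'M_d  is an algebra homomorphism (left action on
   column vectors; permutations composed as functions, (s o t)(x) = s(t(x)),
   which in mathcomp is (t * s)%g). *)
Definition ser_supermodule (n d : nat) (J : 'M[algC]_d)
    (rhoS : {perm 'I_n} -> 'M[algC]_d) (C : 'I_n -> 'M[algC]_d) : Prop :=
  [/\ J *m J = 1%:M,
      (forall j, J *m C j = - (C j *m J)) &
      (forall s, J *m rhoS s = rhoS s *m J)] /\
  [/\ (forall j, C j *m C j = - 1%:M),
      (forall i j, i != j -> C i *m C j = - (C j *m C i)),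
      rhoS 1%g = 1%:M,
      (forall s t, rhoS (t * s)%g = rhoS s *m rhoS t) &
      (forall s j, rhoS s *m C j *m invmx (rhoS s) = C (s j))].

(* the column space spanned by the rows of W is stable under M *)
Definition col_stable (d : nat) (W M : 'M[algC]_d) : bool :=
  (W *m M^T <= W)%MS.

(* simple supermodule: nonzero, and no graded submodule other than 0 and V *)
Definition simple_ser_supermodule (n d : nat) (J : 'M[algC]_d)
    (rhoS : {perm 'I_n} -> 'M[algC]_d) (C : 'I_n -> 'M[algC]_d) : Prop :=
  [/\ ser_supermodule J rhoS C, (0 < d)%N &
      forall W : 'M[algC]_d,
        col_stable W J -> (forall s, col_stable W (rhoS s)) ->
        (forall j, col_stable W (C j)) -> (W == 0) || row_full W].

(* action of c_j for 1-based j (0 outside 1..n, never used there) *)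
Definition cl (n d : nat) (C : 'I_n -> 'M[algC]_d) (j : nat) : 'M[algC]_d :=
  match (insub j.-1 : option 'I_n) with Some o => C o | None => 0 end.

(* action of g_j = s_i s_(i+1) ... s_(j-1) a_j^e  (z |-> -1, a_j |-> c_j) *)
Definition gmat (n d : nat) (rhoS : {perm 'I_n} -> 'M[algC]_d)
    (C : 'I_n -> 'M[algC]_d) (j i : nat) (e : bool) : 'M[algC]_d :=
  (\big[mulmx/1%:M]_(i <= t < j) rhoS (sperm n t)) *m
  (if e then cl C j else 1%:M).

(* L_{n,n-k} is parametrised by f : t |-> (i_j, eps_j) with j = n - t,
   t = 0..k-1 (so j = n, n-1, ..., n-k+1), subject to 1 <= i_j <= j *)
Definition L_param (n k : nat) (f : {ffun 'I_k -> 'I_n.+1 * bool}) : bool :=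
  [forall t : 'I_k, (0 < (f t).1)%N && ((f t).1 <= n - t)%N].

Definition Lmat (n k d : nat) (rhoS : {perm 'I_n} -> 'M[algC]_d)
    (C : 'I_n -> 'M[algC]_d) (f : {ffun 'I_k -> 'I_n.+1 * bool}) : 'M[algC]_d :=
  \big[mulmx/1%:M]_(t < k) gmat rhoS C (n - t) (f t).1 (f t).2.

(* chi(Theta_mu(n)) = trace of the action of
   pi( sum_{g in L_{n,n-k}} g sigma_mu(n) g^{-1} ) *)
Definition chi_Theta (n k d : nat) (rhoS : {perm 'I_n} -> 'M[algC]_d)
    (C : 'I_n -> 'M[algC]_d) (mu : seq nat) : algC :=
  \sum_(f : {ffun 'I_k -> 'I_n.+1 * bool} | @L_param n k f)
     \tr (Lmat rhoS C f *m rhoS (sigma_mu n mu) *m invmx (Lmat rhoS C f)).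

From HB Require Import structures.
From mathcomp Require Import all_boot all_order all_algebra all_fingroup algC.
From mathcomp Require Import zify.
Import GRing.Theory Num.Theory.
Local Open Scope ring_scope.

(* Every coset representative g in L_{n,n-k} acts by an invertible matrix
   (the s_i and c_j do, as s s^-1 = 1 and c_j^2 = -1), so each summand
   g sigma_mu(n) g^-1 of Theta_mu(n) has the trace of sigma_mu(n); the sum has
   |L_{n,n-k}| = 2^k n^(k) terms, and dividing by d = tr 1 gives the formula. *)

Lemma card_ord_interval (n m : nat) : (m <= n)%N ->
  #|[pred i : 'I_n.+1 | (0 < i <= m)%N]| = m.
Proof.
move=> le_mn.
have inj_shift : injective (fun j : 'I_m => lift ord0 (widen_ord le_mn j)).
  by move=> a b /lift_inj /(congr1 val) /= /val_inj.
rewrite -[RHS]card_ord -cardsT -(card_imset _ inj_shift); apply: eq_card => i.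
rewrite !inE; apply/idP/imsetP => [/andP[i_gt0 le_im] | [j _ ->]]; last first.
  by rewrite /= /bump leq0n ltn_ord.
have lt_i1m : (i.-1 < m)%N by rewrite prednK.
exists (Ordinal lt_i1m) => //.
by apply: val_inj; rewrite /= /bump leq0n add1n prednK.
Qed.

Lemma card_L_param (n k : nat) : (k <= n)%N ->
  #|[pred f : {ffun 'I_k -> 'I_n.+1 * bool} | @L_param n k f]|
  = (2 ^ k * n ^_ k)%N.
Proof.
move=> le_kn.
pose F (t : 'I_k) := [pred p : 'I_n.+1 * bool | (0 < p.1 <= n - t)%N].
rewrite (eq_card (B := family F)); last by move=> f; rewrite !inE.
rewrite card_family foldrE big_map big_enum /=.
rewrite (eq_bigr (fun t : 'I_k => (n - t) * 2)%N) => [|t _]; last first.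
  pose I_t := [pred i : 'I_n.+1 | (0 < i <= n - t)%N].
  rewrite (eq_card (B := [predX I_t & predT])).
    by rewrite cardX card_ord_interval ?leq_subr // card_bool.
  by case=> i b; rewrite !inE andbT.
by rewrite big_split /= prod_nat_const card_ord ffact_prod mulnC.
Qed.

Lemma unitmx_big_mulmx (R : comUnitRingType) (d : nat) (I : Type) (r : seq I)
    (P : pred I) (F : I -> 'M[R]_d) :
  (forall i, P i -> F i \in unitmx) ->
  \big[mulmx/1%:M]_(i <- r | P i) F i \in unitmx.
Proof.
move=> F_unit; apply: (big_ind (fun A : 'M_d => A \in unitmx)) => //.
  exact: unitmx1.
by move=> A B uA uB; rewrite unitmx_mul uA uB.
Qed.

Section InvertibleSergeevAction.

Variables (n d : nat) (rhoS : {perm 'I_n} -> 'M[algC]_d).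
Variable C : 'I_n -> 'M[algC]_d.
Hypotheses (rhoS1 : rhoS 1%g = 1%:M)
           (rhoSM : forall s t, rhoS (t * s)%g = rhoS s *m rhoS t)
           (C_sqr : forall j, C j *m C j = - 1%:M).

Lemma rhoS_unit (s : {perm 'I_n}) : rhoS s \in unitmx.
Proof.
have [] // := @mulmx1_unit _ _ (rhoS s) (rhoS s^-1%g).
by rewrite -rhoSM mulVg rhoS1.
Qed.

Lemma cl_unit (j : nat) : (0 < j <= n)%N -> cl C j \in unitmx.
Proof.
move=> /andP[j_gt0 le_jn]; rewrite /cl.
case: insubP => [o _ _ | /negP[]]; last by rewrite prednK.
have [] // := @mulmx1_unit _ _ (C o) (- C o).
by rewrite mulmxN C_sqr opprK.
Qed.

Lemma gmat_unit (j i : nat) (e : bool) :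
  (0 < j <= n)%N -> gmat rhoS C j i e \in unitmx.
Proof.
move=> j_range; rewrite unitmx_mul unitmx_big_mulmx => [|t _]; last first.
  exact: rhoS_unit.
by case: e; [exact: cl_unit | exact: unitmx1].
Qed.

Lemma Lmat_unit (k : nat) (f : {ffun 'I_k -> 'I_n.+1 * bool}) :
  (k <= n)%N -> Lmat rhoS C f \in unitmx.
Proof.
move=> le_kn; apply: unitmx_big_mulmx => t _; apply: gmat_unit.
by have := ltn_ord t; lia.
Qed.

Lemma chi_Theta_card_tr (k : nat) (mu : seq nat) : (k <= n)%N ->
  chi_Theta k rhoS C mu =
    \tr (rhoS (sigma_mu n mu))
      *+ #|[pred f : {ffun 'I_k -> 'I_n.+1 * bool} | @L_param n k f]|.
Proof.
move=> le_kn; rewrite /chi_Theta -sumr_const; apply: eq_bigr => f _.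
by rewrite mxtrace_mulC mulmxA mulVmx ?mul1mx ?Lmat_unit.
Qed.

End InvertibleSergeevAction.

Theorem mainTheorem4 (n k : nat) (mu : seq nat) (d : nat) (J : 'M[algC]_d)
    (rhoS : {perm 'I_n} -> 'M[algC]_d) (C : 'I_n -> 'M[algC]_d) :
  (k <= n)%N -> odd_partition k mu ->
  simple_ser_supermodule J rhoS C ->
  chi_Theta k rhoS C mu / d%:R
  = 2 ^+ k * (n ^_ k)%:R * (\tr (rhoS (sigma_mu n mu)) / \tr (1%:M : 'M[algC]_d)).
Proof.
move=> le_kn _ [[_ [C_sqr _ rhoS1 rhoSM _]] _ _].
rewrite chi_Theta_card_tr // card_L_param // mxtrace1 -[X in X / _]mulr_natl.
by rewrite natrM natrX -!mulrA.
Qed.
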